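(* Let $D_L$ be an oriented link diagram in $S^2$ in which every component passes through at least one crossing, and let $\Gamma_M$ be the perfect matching graph obtained by flattening all crossings of $D_L$ (the closed web associated to $D_L$), representing the planar trivalent graph $G$ with perfect matching $M$. Then $(G,M)\in\mathscr G$; that is, no perfect matching graph representing $(G,M)$ has a bad face in its hypercube of states.
   Context: Flattening a crossing of an oriented link diagram: in a small disk around the crossing, whose boundary meets the diagram in two incoming ends $p,q$ and two outgoing ends $r,s$, replace the crossing by two trivalent vertices $u$ (joined to $p,q$) and $v$ (joined to $r,s$) and an edge $uv$, with no crossings. Flattening all crossings yields a planar trivalent graph $G$ (multiple edges allowed) embedded in $S^2$, and the set $M$ of new edges is a perfect matching; the embedding with $M$ is the perfect matching graph $\Gamma_M$. A perfect matching graph is an embedding in $S^2$ of a planar trivalent graph with a perfect matching $M=\{M_1,\dots,M_n\}$ (ordered). Resolution configurations: $D=(Z(D),A(D))$, $Z(D)$ a finite set of circles immersed in $S^2$ (union has only transverse double points), $A(D)$ a finite totally ordered set of disjoint embedded arcs meeting the circles exactly in their endpoints. Surgery $s_A(D)$ along $A$: in a small disk around $A$ meeting the circles in segments with ends $z,w$ and $x,y$ ($z,x$ on one side of $A$), replace them by strands $z$–$y$ and $x$–$w$ crossing once; arcs become $A(D)\setminus\{A\}$. An arc is an $\eta$-, $\Delta$-, or $m$-arc according as surgery changes the number of circles by $0,+1,-1$. Resolutions: for a matching edge $e=uv$, let $a,b$ be the other edges at $u$ and $c,d$ those at $v$, with $a,c$ on the same side of $e$. The $0$-resolution removes $u,v,e$,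 joins $a$–$c$ and $b$–$d$ by disjoint strands parallel to $e$, and places an arc joining them; the $1$-resolution joins $a$–$d$ and $b$–$c$ by strands crossing once, no arc. $D_{\Gamma_M}(v)$, $v\in\{0,1\}^n$, takes the $v_i$-resolution at $M_i$, arcs $A_i$ ($v_i=0$) ordered by $i$. Bad face: states $v,u$ differing exactly in coordinates $i\neq j$, $v_i=v_j=0$, $u_i=u_j=1$, such that for some ordering of $\{i,j\}$: $A_i$ is an $\eta$-arc of $D_{\Gamma_M}(v)$, $A_j$ is an $\eta$-arc of $s_{A_i}(D_{\Gamma_M}(v))$, $A_j$ is a $\Delta$-arc of $D_{\Gamma_M}(v)$, and $A_i$ is an $m$-arc of $s_{A_j}(D_{\Gamma_M}(v))$. $\mathscr G$ is the family of pairs $(G,M)$ such that for every perfect matching graph representing $(G,M)$ (every plane embedding, every ordering of $M$) the hypercube of states contains no bad face. *)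

From HB Require Import structures.
From mathcomp Require Import all_boot all_order all_fingroup.
Set Implicit Arguments. Unset Strict Implicit. Unset Printing Implicit Defensive.

Section Maps.
Variables (D V : finType).

Definition is_rotation (vtx : D -> V) (sigma : {perm D}) : Prop :=
  forall d d', (vtx d == vtx d') = fconnect sigma d d'.

Definition edge_involution (alpha : D -> D) : Prop :=
  forall d, alpha (alpha d) = d /\ alpha d != d.

Definition ncomp_map (alpha : D -> D) (sigma : {perm D}) : nat :=
  n_comp (fun x y => (y == sigma x) || (y == alpha x)) predT.

(* Genus 0 (embedding in S^2): Euler's formula V - E + F = 2 * #components,
   with V = #sigma-orbits, E = #D/2, F = #orbits of sigma \o alpha. *)
Definition planar_map (alpha : D -> D) (sigma : {perm D}) : Prop :=
  2 * (fcard sigma predT + fcard (sigma \o alpha) predT)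
  = #|D| + 4 * ncomp_map alpha sigma.

(* For a matching dart m at vertex u (other end alpha m at v),
   the darts a = sigma m, b = sigma^-1 m at u and c = sigma^-1 (alpha m),
   d = sigma (alpha m) at v satisfy: a,c on one side of e, b,d on the other.
   0-resolution joins a-c, b-d; 1-resolution joins a-d, b-c.
   [partner s x] is the non-matching dart joined to the non-matching dart x
   by the strand of the s-resolution at the matching edge at x's vertex. *)
Definition partner (alpha : D -> D) (sigma : {perm D}) (M : pred D)
  (s : D -> bool) (x : D) : D :=
  if M ((sigma^-1)%g x) then
    let m := (sigma^-1)%g x in
    if s m then sigma (alpha m) else (sigma^-1)%g (alpha m)
  else
    let m := sigma x in
    if s m then (sigma^-1)%g (alpha m) else sigma (alpha m).

Definition ncircles (alpha : D -> D) (sigma : {perm D}) (M : pred D)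
  (s : D -> bool) : nat :=
  n_comp (fun x y => [&& ~~ M x, ~~ M y &
            [|| y == alpha x, x == alpha y,
                y == partner alpha sigma M s x | x == partner alpha sigma M s y]])
         (predC M).

Definition upd (alpha : D -> D) (s : D -> bool) (i : D) : D -> bool :=
  fun d => [|| d == i, d == alpha i | s d].

(* The bad-face condition for the ordering (i, j), using
   s_{A_i}(D(v)) = D(v + e_i) and eta/Delta/m = change of #circles 0/+1/-1. *)
Definition bad_pair (alpha : D -> D) (sigma : {perm D}) (M : pred D)
  (v : D -> bool) (i j : D) : Prop :=
  let nc := ncircles alpha sigma M in
  [/\ nc (upd alpha v i) = nc v,
      nc (upd alpha (upd alpha v i) j) = nc (upd alpha v i),
      nc (upd alpha v j) = (nc v).+1
    & nc (upd alpha v j) = (nc (upd alpha (upd alpha v j) i)).+1].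

Definition has_bad_face (alpha : D -> D) (sigma : {perm D}) (M : pred D) : Prop :=
  exists (v : D -> bool) (i j : D),
    [/\ forall d, v (alpha d) = v d,
        M i /\ M j,
        j != i /\ j != alpha i,
        v i = false /\ v j = false
      & bad_pair alpha sigma M v i j \/ bad_pair alpha sigma M v j i].

(* (G, M) in script-G: no plane embedding (any ordering of M; orderings do
   not affect circle counts) has a bad face. *)
Definition in_scriptG (vtx : D -> V) (alpha : D -> D) (M : pred D) : Prop :=
  forall sigma : {perm D}, is_rotation vtx sigma -> planar_map alpha sigma ->
    ~ has_bad_face alpha sigma M.
End Maps.

Section Diagram.
Variables (T V : finType).

(* An oriented link diagram in S^2 all of whose components contain a crossing,
   as a 4-valent plane map: darts T, crossings V, edge involution alpha,
   rotation sigma (ccw), orientation [out d] = the edge of d leaves its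
   crossing at d.  Strands go straight through crossings and are consistently
   oriented: opposite ends at a crossing have opposite in/out status. *)
Definition oriented_link_diagram (vtx : T -> V) (alpha : T -> T)
  (sigma : {perm T}) (out : T -> bool) : Prop :=
  [/\ edge_involution alpha,
      is_rotation vtx sigma,
      forall x : V, #|[pred d | vtx d == x]| = 4,
      planar_map alpha sigma
    & (forall d, out (alpha d) = ~~ out d) /\
      (forall d, out (sigma (sigma d)) = ~~ out d)].

(* Flattening: vertex (x,false) = u (incoming side), (x,true) = v.
   Darts: inl d (diagram edge-end d), inr (x,b) (matching edge at crossing x). *)
Definition flat_vtx (vtx : T -> V) (out : T -> bool) (z : T + (V * bool)) : V * bool :=
  match z with inl d => (vtx d, out d) | inr p => p end.

Definition flat_alpha (alpha : T -> T) (z : T + (V * bool)) : T + (V * bool) :=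
  match z with inl d => inl (alpha d) | inr (x, b) => inr (x, ~~ b) end.

Definition flat_M : pred (T + (V * bool)) :=
  fun z => if z is inr _ then true else false.
End Diagram.

(* In the web obtained by flattening an oriented diagram, every trivalent vertex
   is a source or a sink, and the orientation is reversed along every edge and
   along every resolution strand.  Hence the circles of any state are exactly the
   cycles of a permutation of the non-matching darts: from an outgoing end follow
   the edge, from an incoming end follow the resolution strand.  Changing the
   resolution at one matching edge composes this permutation with a
   transposition, so the number of circles changes by exactly one: no arc of any
   state is an eta-arc, whereas a bad face needs one. *)
From HB Require Import structures.
From Pilot Require Import Defs.
From mathcomp Require Import all_boot all_order all_fingroup.
From mathcomp Require Import zify.
Set Implicit Arguments. Unset Strict Implicit. Unset Printing Implicit Defensive.

Lemma porbit_fconnect (T : finType) (s : {perm T}) x :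
  porbit s x = [set y | fconnect s x y].
Proof.
apply/setP=> y; rewrite inE; apply/porbitP/idP.
  by case=> i ->; rewrite permX; apply: fconnect_iter.
by move=> h; exists (findex s x y); rewrite permX iter_findex.
Qed.

Lemma card_porbits (T : finType) (s : {perm T}) : #|porbits s| = n_comp (frel s) T.
Proof.
have symf : connect_sym (frel s) := fconnect_sym (@perm_inj _ s).
have -> : porbits s = porbit s @: [set x | roots (frel s) x].
  apply/setP=> P; apply/imsetP/imsetP => [[x _ ->]|[x _ ->]]; last by exists x.
  exists (root (frel s) x); first by rewrite inE roots_root.
  rewrite !porbit_fconnect; apply/setP=> y; rewrite !inE.
  by rewrite (same_connect symf (connect_root _ x)).
rewrite card_in_imset; last first.
  move=> x y; rewrite !inE => /eqP rx /eqP ry; rewrite !porbit_fconnect => E.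
  have : y \in [set z | fconnect s x z] by rewrite E inE connect0.
  by rewrite inE => /(rootP symf); rewrite rx ry.
by apply: eq_card => x; rewrite !inE andbT.
Qed.

Lemma fconnect_fixpoint (T : finType) (f : T -> T) x :
  f x = x -> forall y, fconnect f x y = (y == x).
Proof.
move=> fx y; apply/idP/idP => [xy|/eqP ->]; last exact: connect0.
have iter_x n : iter n f x = x by elim: n => //= n ->.
by rewrite -(iter_findex xy) iter_x.
Qed.

Lemma card_pred_sum (A B : finType) (P : pred (A + B)) :
  #|P| = #|[pred a | P (inl a)]| + #|[pred b | P (inr b)]|.
Proof.
rewrite -(cardID [pred z : A + B | if z is inl _ then true else false] P).
have inlI : injective (@inl A B) by move=> x y [].
have inrI : injective (@inr A B) by move=> x y [].
congr (_ + _).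
  rewrite -(card_image inlI [pred a | P (inl a)]); apply: eq_card => -[x|y].
    by rewrite mem_image // !inE andbT.
  by rewrite !inE andbF; apply/esym/negbTE/imageP => -[x _].
rewrite -(card_image inrI [pred b | P (inr b)]); apply: eq_card => -[x|y].
  by rewrite !inE /=; apply/esym/negbTE/imageP => -[y _].
by rewrite mem_image // !inE andbT.
Qed.

Lemma eq_ncircles (X : finType) (alpha : X -> X) (rho : {perm X}) (M : pred X)
  (s1 s2 : X -> bool) :
  s1 =1 s2 -> ncircles alpha rho M s1 = ncircles alpha rho M s2.
Proof.
move=> s12; have eq_p x : partner alpha rho M s1 x = partner alpha rho M s2 x.
  by rewrite /partner !s12.
by apply: eq_n_comp => x y; apply: eq_connect => {}x {}y; rewrite !eq_p.
Qed.

Lemma upd_alpha (X : finType) (alpha : X -> X) (s : X -> bool) (m : X) :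
  involutive alpha -> (forall d, s (alpha d) = s d) ->
  forall d, upd alpha s m (alpha d) = upd alpha s m d.
Proof.
move=> alphaK s_alpha d.
by rewrite /upd s_alpha -{1}(alphaK m) !(can_eq alphaK) orbCA.
Qed.

Lemma upd_alpha_dart (X : finType) (alpha : X -> X) (s : X -> bool) (m : X) :
  involutive alpha -> upd alpha s (alpha m) =1 upd alpha s m.
Proof. by move=> alphaK d; rewrite /upd alphaK orbCA. Qed.

Section TrivalentWeb.
Variables (X W : finType) (vtx : X -> W) (side : W -> bool).
Variables (alpha : X -> X) (rho : {perm X}) (M : pred X).
Hypothesis alphaK : involutive alpha.
Hypothesis M_alpha : forall z, M (alpha z) = M z.
Hypothesis side_alpha : forall z, side (vtx (alpha z)) = ~~ side (vtx z).
Hypothesis rho_rot : is_rotation vtx rho.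
Hypothesis card_vtx : forall z, #|[pred y | vtx y == vtx z]| = 3.
Hypothesis M_vtx_uniq : forall z z', M z -> M z' -> vtx z = vtx z' -> z = z'.
Hypothesis M_vtx : forall z, exists2 m, M m & vtx m = vtx z.

Local Notation partner := (partner alpha rho M).
Local Notation ncircles := (ncircles alpha rho M).

Lemma vtx_rho z : vtx (rho z) = vtx z.
Proof. by apply/esym/eqP; rewrite rho_rot fconnect1. Qed.

Lemma order_rho z : fingraph.order rho z = 3.
Proof. by rewrite -(card_vtx z); apply: eq_card => y; rewrite inE -rho_rot eq_sym. Qed.

Lemma orbit_rho z : fingraph.orbit rho z = [:: z; rho z; rho (rho z)].
Proof. by rewrite /fingraph.orbit order_rho. Qed.

Lemma rho3 z : rho (rho (rho z)) = z.
Proof. by have := iter_order (@perm_inj _ rho) z; rewrite order_rho. Qed.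

Lemma uniq_orbit_rho z : [&& z != rho z, z != rho (rho z) & rho z != rho (rho z)].
Proof.
have := orbit_uniq rho z; rewrite orbit_rho /= !inE !negb_or andbT.
by case/andP=> /andP[-> ->] ->.
Qed.

Lemma rhoV z : (rho^-1)%g z = rho (rho z).
Proof. by rewrite -{1}(rho3 z) permK. Qed.

Lemma vtx_rhoV z : vtx ((rho^-1)%g z) = vtx z.
Proof. by rewrite rhoV !vtx_rho. Qed.

Lemma notM_rho m : M m -> ~~ M (rho m).
Proof.
move=> Mm; apply/negP => Mr; have E := M_vtx_uniq Mr Mm (vtx_rho m).
by move: (uniq_orbit_rho m) => /and3P[+ _ _]; rewrite E eqxx.
Qed.

Lemma notM_rhoV m : M m -> ~~ M ((rho^-1)%g m).
Proof.
move=> Mm; apply/negP => Mr; have E := M_vtx_uniq Mr Mm (vtx_rhoV m).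
by move: (uniq_orbit_rho m) => /and3P[_ + _]; rewrite -rhoV E eqxx.
Qed.

Lemma notM_next_to_M z : ~~ M z -> exists2 m, M m & z = rho m \/ z = (rho^-1)%g m.
Proof.
move=> nMz; have [m Mm vtx_m] := M_vtx z; exists m => //.
have : fconnect rho z m by rewrite -rho_rot vtx_m.
rewrite fconnect_orbit orbit_rho !inE => /or3P[/eqP e|/eqP e|/eqP e].
- by rewrite -e Mm in nMz.
- by right; rewrite e permK.
- by left; rewrite e rho3.
Qed.

Lemma partner_rho s m : M m -> partner s (rho m) =
  if s m then rho (alpha m) else (rho^-1)%g (alpha m).
Proof. by move=> Mm; rewrite /Defs.partner permK Mm. Qed.

Lemma partner_rhoV s m : M m -> partner s ((rho^-1)%g m) =
  if s m then (rho^-1)%g (alpha m) else rho (alpha m).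
Proof.
move=> Mm; have rhoVV : (rho^-1)%g ((rho^-1)%g m) = rho m by rewrite !rhoV rho3.
by rewrite /Defs.partner rhoVV (negbTE (notM_rho Mm)) permKV.
Qed.

Lemma notM_partner s z : ~~ M z -> ~~ M (partner s z).
Proof.
move=> /notM_next_to_M[m Mm [->|->]];
  rewrite ?partner_rho ?partner_rhoV //;
  by case: (s m); rewrite ?notM_rho ?notM_rhoV ?M_alpha.
Qed.

Lemma side_partner s z : ~~ M z -> side (vtx (partner s z)) = ~~ side (vtx z).
Proof.
move=> /notM_next_to_M[m Mm [->|->]];
  rewrite ?partner_rho ?partner_rhoV //;
  by case: (s m); rewrite ?vtx_rho ?vtx_rhoV side_alpha.
Qed.

Section State.
Variable s : X -> bool.
Hypothesis s_alpha : forall m, s (alpha m) = s m.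

Lemma partnerK z : ~~ M z -> partner s (partner s z) = z.
Proof.
have M_alpha' m : M m -> M (alpha m) by rewrite M_alpha.
move=> /notM_next_to_M[m Mm [->|->]]; rewrite ?partner_rho ?partner_rhoV //;
  by case E: (s m); rewrite ?partner_rho ?partner_rhoV ?M_alpha' // s_alpha E alphaK.
Qed.

(* Matching darts are fixed points; since both the edge and the strand reverse
   the orientation, this map is injective and its cycles traverse each circle
   alternately along edges and strands. *)
Definition circle_next z :=
  if M z then z else if side (vtx z) then alpha z else partner s z.

Lemma circle_next_inj : injective circle_next.
Proof.
have alphaI := can_inj alphaK.
move=> z1 z2; rewrite /circle_next.
case M1: (M z1); case M2: (M z2) => //.
- move=> E; move: M1; rewrite E; case: (side _); first by rewrite M_alpha M2.
  by move=> M_p; move: (notM_partner s (negbT M2)); rewrite M_p.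
- move=> E; move: M2; rewrite -E; case: (side _); first by rewrite M_alpha M1.
  by move=> M_p; move: (notM_partner s (negbT M1)); rewrite M_p.
case o1: (side (vtx z1)); case o2: (side (vtx z2)).
- exact: alphaI.
- move=> E; have := congr1 (side \o vtx) E.
  by rewrite /= side_alpha side_partner ?M2 // o1 o2.
- move=> E; have := congr1 (side \o vtx) E.
  by rewrite /= side_alpha side_partner ?M1 // o1 o2.
- by move=> E; have := congr1 (partner s) E; rewrite !partnerK ?M1 ?M2.
Qed.

Definition circle_perm := perm circle_next_inj.

Lemma circle_permE : circle_perm =1 circle_next.
Proof. exact: permE. Qed.

Definition circle_rel : rel X := fun x y => [&& ~~ M x, ~~ M y &
   [|| y == alpha x, x == alpha y, y == partner s x | x == partner s y]].

Lemma circle_rel_sym : symmetric circle_rel.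
Proof.
move=> x y; apply/idP/idP => /and3P[Mx My xy]; apply/and3P; split => //;
  by case/or4P: xy => ->; rewrite ?orbT.
Qed.

Lemma circle_perm_adjunction :
  rel_adjunction id circle_rel (frel circle_perm) (predC M).
Proof.
have symF : connect_sym (frel circle_perm) := fconnect_sym (@perm_inj _ _).
have step x y : (circle_next x == y) || (circle_next y == x) ->
    connect (frel circle_perm) x y.
  by case/orP=> /eqP <-; [|rewrite symF]; apply: connect1; rewrite /= circle_permE.
split => [x _ | x y _]; first by exists x; apply: connect0.
apply/idP/idP; apply: connect_sub => {}x {}y.
  rewrite /= circle_permE /circle_next => /eqP <-.
  case Mx: (M x); first exact: connect0.
  apply: connect1; rewrite /circle_rel Mx /=.
  case: (side _); first by rewrite M_alpha Mx eqxx.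
  by rewrite notM_partner ?Mx // eqxx !orbT.
case/and3P=> nMx nMy; case/or4P => /eqP E; apply: step;
  rewrite /circle_next (negbTE nMx) (negbTE nMy).
- by case ox: (side (vtx x)); rewrite E ?side_alpha ?ox ?alphaK eqxx ?orbT.
- by case oy: (side (vtx y)); rewrite E ?side_alpha ?oy ?alphaK eqxx ?orbT.
- by case ox: (side (vtx x)); rewrite E ?side_partner ?ox ?partnerK // eqxx ?orbT.
- by case oy: (side (vtx y)); rewrite E ?side_partner ?oy ?partnerK // eqxx ?orbT.
Qed.

Lemma n_comp_circle_perm_M : n_comp (frel circle_perm) M = #|M|.
Proof.
apply: eq_card => x; rewrite !inE unfold_in; case Mx: (M x); rewrite ?andbF ?andbT //.
have fx : circle_perm x = x by rewrite circle_permE /circle_next Mx.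
rewrite /roots /root; case: pickP => [y|] /=; last by rewrite eqxx.
by rewrite (fconnect_fixpoint fx) => /eqP ->; rewrite eqxx.
Qed.

Lemma ncircles_porbits : ncircles s + #|M| = #|porbits circle_perm|.
Proof.
have symR : connect_sym circle_rel := sym_connect_sym circle_rel_sym.
have symF : connect_sym (frel circle_perm) := fconnect_sym (@perm_inj _ _).
have closedR : closed circle_rel (predC M).
  by move=> x y /and3P[Mx My _]; rewrite !inE Mx My.
rewrite /Defs.ncircles -/circle_rel.
rewrite (adjunction_n_comp id symR symF closedR circle_perm_adjunction).
by rewrite card_porbits (n_compC M) addnC n_comp_circle_perm_M.
Qed.

End State.

Lemma circle_perm_upd s (s_alpha : forall m, s (alpha m) = s m) m :
  M m -> side (vtx m) = false -> s m = false ->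
  circle_perm (upd_alpha m alphaK s_alpha) =
  (tperm (rho m) ((rho^-1)%g m) * circle_perm s_alpha)%g.
Proof.
move=> Mm om sm; have s'm : upd alpha s m m by rewrite /upd eqxx.
apply/permP => z; rewrite permM; case: tpermP => [->|->|za zb];
  rewrite !circle_permE /circle_next.
1,2: by rewrite (negbTE (notM_rho Mm)) (negbTE (notM_rhoV Mm)) vtx_rho vtx_rhoV
  om partner_rho // partner_rhoV // s'm sm.
case Mz: (M z) => //; case oz: (side (vtx z)) => //.
have [m' Mm' zm'] := notM_next_to_M (negbT Mz).
have om' : side (vtx m') = false by case: zm' oz => ->; rewrite ?vtx_rho ?vtx_rhoV.
have s'm' : upd alpha s m m' = s m'.
  rewrite /upd; have -> : (m' == m) = false.
    by apply/negbTE/eqP => e; case: zm'; rewrite e.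
  have -> // : (m' == alpha m) = false.
  by apply/negbTE/eqP => e; move: om'; rewrite e side_alpha om.
by case: zm' => ->; rewrite ?partner_rho ?partner_rhoV // s'm'.
Qed.

Lemma ncircles_upd_neq s : (forall m, s (alpha m) = s m) ->
  forall m, M m -> s m = false -> ncircles (upd alpha s m) != ncircles s.
Proof.
move=> s_alpha; suff flip m : M m -> side (vtx m) = false -> s m = false ->
    ncircles (upd alpha s m) != ncircles s.
  move=> m Mm sm; case om: (side (vtx m)); last exact: flip.
  rewrite -(eq_ncircles _ _ _ (upd_alpha_dart s m alphaK)).
  by apply: flip; rewrite ?M_alpha ?side_alpha ?om ?s_alpha.
move=> Mm om sm; have ab : rho m != (rho^-1)%g m.
  by rewrite rhoV; case/and3P: (uniq_orbit_rho m).
have := porbits_mul_tperm (circle_perm s_alpha) (rho m) ((rho^-1)%g m).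
rewrite /= ab -circle_perm_upd // -!ncircles_porbits.
move=> H; apply/eqP => E; move: H; rewrite E -!addnA => /addnI/addnI.
by case: (_ \notin _).
Qed.

End TrivalentWeb.

Section Flattening.
Variables (T V : finType) (vtx : T -> V) (alpha : T -> T).
Variables (sigma : {perm T}) (out : T -> bool).
Hypothesis diagram : oriented_link_diagram vtx alpha sigma out.

Lemma card_crossing_ends x b : #|[pred d | (vtx d == x) && (out d == b)]| = 2.
Proof.
case: diagram => _ rot card4 _ [_ out_sigma2].
have vtx_sigma d : vtx (sigma d) = vtx d by apply/esym/eqP; rewrite rot fconnect1.
have le b' : #|[pred d | (vtx d == x) && (out d == b')]|
           <= #|[pred d | (vtx d == x) && (out d == ~~ b')]|.
  have sigma2I : injective (fun d => sigma (sigma d)).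
    by move=> d1 d2 /perm_inj/perm_inj.
  rewrite -(card_image sigma2I); apply/subset_leq_card/subsetP => y.
  move=> /imageP[d /andP[/eqP vd /eqP od] ->].
  by rewrite inE !vtx_sigma vd out_sigma2 od !eqxx.
have total : #|[pred d | (vtx d == x) && (out d == true)]|
           + #|[pred d | (vtx d == x) && (out d == false)]| = 4.
  rewrite -(card4 x) -(cardID [pred d | out d] [pred d | vtx d == x]).
  congr (_ + _); apply: eq_card => d; rewrite !inE;
    by case: (out d); rewrite ?andbT ?andbF.
by have := le true; have := le false; case: b => /=; lia.
Qed.

Local Notation fvtx := (flat_vtx vtx out).
Local Notation falpha := (@flat_alpha T V alpha).

Lemma card_flat_vtx z : #|[pred y | fvtx y == fvtx z]| = 3.
Proof.
rewrite card_pred_sum; case: (fvtx z) => x b.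
rewrite (eq_card (B := [pred d | (vtx d == x) && (out d == b)])) ?card_crossing_ends;
  last by move=> d; rewrite !inE /= xpair_eqE.
by rewrite (eq_card (B := pred1 (x, b))) ?card1.
Qed.

Lemma flat_alphaK : involutive falpha.
Proof.
case: diagram => alpha_inv _ _ _ _.
by case=> [d|[x b]] /=; [case: (alpha_inv d) => -> | rewrite negbK].
Qed.

Lemma flat_side_alpha z : (fvtx (falpha z)).2 = ~~ (fvtx z).2.
Proof.
case: diagram => _ _ _ _ [out_alpha _].
by case: z => [d|[x b]] //=; apply: out_alpha.
Qed.

Lemma flat_no_eta_arc (rho : {perm T + V * bool}) (s : T + V * bool -> bool) m :
  is_rotation fvtx rho -> (forall d, s (falpha d) = s d) ->
  @flat_M T V m -> s m = false ->
  ncircles falpha rho (@flat_M T V) (upd falpha s m)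
    != ncircles falpha rho (@flat_M T V) s.
Proof.
move=> rho_rot s_alpha; apply: (ncircles_upd_neq (side := snd) flat_alphaK) => //.
- by case=> [|[]].
- exact: flat_side_alpha.
- exact: card_flat_vtx.
- by case=> // p1 [] // p2 _ _ /= ->.
- by move=> z; exists (inr (fvtx z)).
Qed.

End Flattening.

Theorem mainTheorem11 (T V : finType) (vtx : T -> V) (alpha : T -> T)
  (sigma : {perm T}) (out : T -> bool) :
  oriented_link_diagram vtx alpha sigma out ->
  in_scriptG (flat_vtx vtx out) (flat_alpha alpha) (@flat_M T V).
Proof.
move=> diagram rho rho_rot _ [v [i [j [v_alpha [Mi Mj] _ [vi vj] bad]]]].
have no_eta := flat_no_eta_arc diagram rho_rot v_alpha.
by case: bad => -[eta_arc _ _ _]; [move: (no_eta i Mi vi) | move: (no_eta j Mj vj)];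
  rewrite eta_arc eqxx.
Qed.
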